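(* Let $f_1,\dots,f_n$ be monotone linear functions and let $\sigma$ be a counterclockwise permutation for them with $f^\sigma(x)=x$ for all $x$. Then $f^\tau(x)=x$ for all $x$ and every counterclockwise permutation $\tau$ for $f_1,\dots,f_n$.
   Context: A linear function is $f(x)=ax+b$; monotone means $a>0$; identical means $f(x)=x$. $\vec f=(b,1-a)^\top$ and $\theta(f)\in[0,2\pi)$ is its polar angle ($\bot$ if $\vec f=0$). For a permutation $\sigma$ of $[n]$, $f^\sigma=f_{\sigma(n)}\circ\cdots\circ f_{\sigma(1)}$. $\sigma$ is counterclockwise if, after discarding positions $i$ with $f_{\sigma(i)}$ identical, there is $k$ such that $\theta(f_{\sigma(k)})\le\cdots\le\theta(f_{\sigma(n)})\le\theta(f_{\sigma(1)})\le\cdots\le\theta(f_{\sigma(k-1)})$. *)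

From mathcomp Require Import all_boot all_fingroup.
From Stdlib Require Import Reals.

Set Implicit Arguments.
Unset Strict Implicit.
Unset Printing Implicit Defensive.

Definition linfun := (R * R)%type.

Definition lf_eval (f : linfun) (x : R) : R := (f.1 * x + f.2)%R.

Definition monotone (f : linfun) : Prop := (0 < f.1)%R.

Definition identical (f : linfun) : Prop := f.1 = 1%R /\ f.2 = 0%R.

Definition lf_vec (f : linfun) : R * R := (f.2, 1 - f.1)%R.

(* Polar angle in [0, 2*PI) of a nonzero vector (x, y). *)
Definition polar_angle (v : R * R) : R :=
  let r := sqrt (v.1 * v.1 + v.2 * v.2) in
  if Rle_dec 0 v.2 then acos (v.1 / r)%R else (2 * PI - acos (v.1 / r))%R.

(* theta(f); None plays the role of bottom (vec f = 0). *)
Definition theta (f : linfun) : option R :=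
  if Req_EM_T (lf_vec f).1 0 then
    if Req_EM_T (lf_vec f).2 0 then None else Some (polar_angle (lf_vec f))
  else Some (polar_angle (lf_vec f)).

Definition Rleb (x y : R) : bool := if Rle_dec x y then true else false.

Definition perm_seq n (f : 'I_n -> linfun) (s : 'S_n) : seq linfun :=
  [seq f (s i) | i <- enum 'I_n].

(* f^sigma = f_{sigma(n)} o ... o f_{sigma(1)} : apply f_{sigma(1)} first. *)
Definition comp_perm n (f : 'I_n -> linfun) (s : 'S_n) (x : R) : R :=
  foldl (fun y g => lf_eval g y) x (perm_seq f s).

(* Counterclockwise: after discarding identical functions, the sequence of
   angles theta(f_{sigma(k)}) .. theta(f_{sigma(n)}), theta(f_{sigma(1)}) ..
   theta(f_{sigma(k-1)}) is nondecreasing for some k, i.e. some rotation of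
   the angle sequence is sorted. *)
Definition counterclockwise n (f : 'I_n -> linfun) (s : 'S_n) : Prop :=
  let angs := pmap theta (perm_seq f s) in
  exists k : nat, sorted Rleb (rot k angs).

(* Discard the identical functions.  After suitable rotations, the remaining
   functions of sigma and of tau are listed by nondecreasing angle, so the two
   rotated lists differ only by reorderings inside blocks of equal angle.
   Functions of equal angle have parallel vectors (b, 1 - a), and x |-> a x + b
   commutes with x |-> a' x + b' exactly when b (1 - a') = b' (1 - a), so the
   two rotated compositions coincide.  A rotation of a composition of
   bijections is conjugate to it, hence is the identity iff the composition is. *)

From mathcomp Require Import all_boot all_fingroup.
From Stdlib Require Import Reals Lra.

Set Implicit Arguments.
Unset Strict Implicit.
Unset Printing Implicit Defensive.

Open Scope R_scope.

Lemma RlebP (x y : R) : reflect (x <= y) (Rleb x y).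
Proof. by rewrite /Rleb; case: Rle_dec => h; constructor. Qed.

Lemma Rleb_trans : transitive Rleb.
Proof. by move=> y x z /RlebP hxy /RlebP hyz; apply/RlebP; lra. Qed.

Lemma polar_angle_coords (v : R * R) :
  0 < v.1 * v.1 + v.2 * v.2 ->
  v.1 = sqrt (v.1 * v.1 + v.2 * v.2) * cos (polar_angle v) /\
  v.2 = sqrt (v.1 * v.1 + v.2 * v.2) * sin (polar_angle v).
Proof.
case: v => x y /= pos; rewrite /polar_angle /=.
set r := sqrt (x * x + y * y).
have r_pos : 0 < r by apply: sqrt_lt_R0.
have r_sq : r * r = x * x + y * y by apply: sqrt_sqrt; lra.
have x_bound : -1 <= x / r <= 1.
  have x_le_r : -r <= x <= r by split; nra.
  have xE : x = x / r * r by field; lra.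
  move: (x / r) xE => u xE; split; nra.
have div_r_ge0 z : 0 <= z -> 0 <= z / r.
  by move=> z_ge0; apply: Rmult_le_pos => //; apply/Rlt_le/Rinv_0_lt_compat.
have sin_acos_x : sin (acos (x / r)) = sqrt ((y / r)²).
  by rewrite sin_acos //; congr sqrt; rewrite /Rsqr; field_simplify_eq; lra.
case: Rle_dec => hy.
- rewrite cos_acos // sin_acos_x sqrt_Rsqr; last exact: div_r_ge0.
  by split; field; lra.
- rewrite cos_minus sin_minus cos_2PI sin_2PI cos_acos // sin_acos_x.
  rewrite Rsqr_neg sqrt_Rsqr; last first.
    by rewrite Ropp_div_distr_l; apply: div_r_ge0; lra.
  by split; field; lra.
Qed.

Lemma polar_angle_parallel (v w : R * R) :
  0 < v.1 * v.1 + v.2 * v.2 -> 0 < w.1 * w.1 + w.2 * w.2 ->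
  polar_angle v = polar_angle w -> v.1 * w.2 = v.2 * w.1.
Proof.
move=> /polar_angle_coords [v1E v2E] /polar_angle_coords [w1E w2E] vw.
rewrite vw in v1E v2E.
set rv := sqrt (v.1 * v.1 + _) in v1E v2E.
set rw := sqrt (w.1 * w.1 + _) in w1E w2E.
by rewrite v1E v2E w1E w2E; ring.
Qed.

Lemma lf_eval_comm (g h : linfun) :
  (lf_vec g).1 * (lf_vec h).2 = (lf_vec g).2 * (lf_vec h).1 ->
  forall y, lf_eval g (lf_eval h y) = lf_eval h (lf_eval g y).
Proof. by rewrite /lf_vec /lf_eval /= => parallel y; nra. Qed.

Definition lf_angle (g : linfun) : R := polar_angle (lf_vec g).

Lemma theta_None (g : linfun) : theta g = None -> forall y, lf_eval g y = y.
Proof.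
rewrite /theta /lf_vec /lf_eval /=.
case: Req_EM_T => // b0; case: Req_EM_T => // a1 _ y.
by rewrite b0 (_ : g.1 = 1); lra.
Qed.

Lemma theta_Some (g : linfun) (t : R) : theta g = Some t ->
  t = lf_angle g /\ 0 < (lf_vec g).1 * (lf_vec g).1 + (lf_vec g).2 * (lf_vec g).2.
Proof.
rewrite /theta; set v := lf_vec g.
case: Req_EM_T => [v1|v1]; [case: Req_EM_T => // v2|]; case=> <-; split=> //.
- by rewrite v1; nra.
- by nra.
Qed.

Lemma lf_eval_comm_theta (g h : linfun) (t : R) :
  theta g = Some t -> theta h = Some t ->
  forall y, lf_eval g (lf_eval h y) = lf_eval h (lf_eval g y).
Proof.
move=> /theta_Some [-> g_pos] /theta_Some [gh h_pos].
by apply/lf_eval_comm/polar_angle_parallel.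
Qed.

Lemma pmap_theta (s : seq linfun) :
  pmap theta s = map lf_angle (filter (fun g => isSome (theta g)) s).
Proof.
elim: s => //= g s IHs; case E: (theta g) => [t|] //=.
by rewrite IHs; case: (theta_Some E) => ->.
Qed.

Section FoldlSortedPerm.

Variables (T : Type) (I : eqType) (act : T -> I -> T) (le : rel I).
Hypothesis le_trans : transitive le.

Lemma foldl_act_comm (x : I) (A : seq I) (t : T) :
  {in A, forall a u, act (act u x) a = act (act u a) x} ->
  foldl act (act t x) A = act (foldl act t A) x.
Proof.
elim: A t => //= a A IHA t comm_xA.
rewrite comm_xA ?mem_head // IHA // => b bA.
by apply: comm_xA; rewrite in_cons bA orbT.
Qed.

(* Two sorted arrangements of the same multiset only differ inside blocks of
   [le]-equivalent elements, so they act alike when such elements commute. *)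
Lemma foldl_sorted_perm (s1 s2 : seq I) :
  perm_eq s1 s2 -> sorted le s1 -> sorted le s2 ->
  {in s1 &, forall i j, le i j -> le j i ->
     forall u, act (act u i) j = act (act u j) i} ->
  forall t, foldl act t s1 = foldl act t s2.
Proof.
rewrite !sorted_pairwise //.
elim: s1 s2 => [|x s1 IHs1] s2 perm12 sorted1 sorted2 comm t.
  by move/perm_size: perm12; case: s2 {sorted2}.
have x_in_s2 : x \in s2 by rewrite -(perm_mem perm12) mem_head.
case/splitPr: x_in_s2 perm12 sorted2 => A B perm12 sorted2.
have perm1AB : perm_eq s1 (A ++ B).
  rewrite -(perm_cons x); apply: perm_trans perm12 _.
  by rewrite -[x :: B]cat1s perm_catCA.
have in_s1 a : a \in A -> a \in s1 by rewrite (perm_mem perm1AB) mem_cat => ->.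
move: sorted1; rewrite pairwise_cons => /andP [le_x_s1 sorted1].
move: sorted2; rewrite pairwise_cat pairwise_cons => /and3P [le_A_xB sortedA].
case/andP=> _ sortedB.
rewrite foldl_cat /= -foldl_act_comm => [|a aA u].
  rewrite -foldl_cat; apply: IHs1 => //.
  - rewrite pairwise_cat sortedA sortedB !andbT; apply/allrelP => a b aA bB.
    by move/allrelP: le_A_xB; apply=> //; rewrite in_cons bB orbT.
  - by move=> i j is1 js1; apply: comm; rewrite in_cons ?is1 ?js1 orbT.
apply: comm; rewrite ?mem_head ?in_cons ?in_s1 ?orbT //.
- by move/allP: le_x_s1; apply; apply: in_s1.
- by move/allrelP: le_A_xB; apply; rewrite ?mem_head.
Qed.

End FoldlSortedPerm.

Section Composition.

Variables (I : eqType) (f : I -> linfun).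

Definition lf_comp (s : seq I) (x : R) : R :=
  foldl (fun y i => lf_eval (f i) y) x s.

Definition nontrivial (i : I) : bool := isSome (theta (f i)).

Lemma lf_compE (s : seq I) (x : R) :
  lf_comp s x = foldl (fun y g => lf_eval g y) x (map f s).
Proof. by elim: s x => //= i s IHs x; rewrite -IHs. Qed.

Lemma lf_comp_cat (s1 s2 : seq I) (x : R) :
  lf_comp (s1 ++ s2) x = lf_comp s2 (lf_comp s1 x).
Proof. exact: foldl_cat. Qed.

Hypothesis slope_neq0 : forall i, (f i).1 <> 0.

Lemma lf_comp_surjective (s : seq I) (y : R) : exists x, lf_comp s x = y.
Proof.
elim: s y => [|i s IHs] y; first by exists y.
have [z zy] := IHs y; exists ((z - (f i).2) / (f i).1).
rewrite -zy /lf_comp /= /lf_eval; congr foldl; field; exact: slope_neq0.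
Qed.

(* A rotation of the composition is conjugate to it. *)
Lemma lf_comp_rot (k : nat) (s : seq I) :
  (forall x, lf_comp s x = x) -> forall x, lf_comp (rot k s) x = x.
Proof.
move=> s_id x; have [x0 <-] := lf_comp_surjective (take k s) x.
by rewrite /rot lf_comp_cat -(lf_comp_cat (take k s)) cat_take_drop s_id.
Qed.

Lemma lf_comp_filter (s : seq I) (x : R) :
  lf_comp s x = lf_comp (filter nontrivial s) x.
Proof.
rewrite /nontrivial; elim: s x => //= i s IHs x.
by case E: (theta (f i)) => [t|] /=; rewrite IHs // (theta_None E).
Qed.

End Composition.

Lemma perm_eq_map_enum (T : finType) (sigma tau : {perm T}) :
  perm_eq (map sigma (enum T)) (map tau (enum T)).
Proof.
have perm_enum (rho : {perm T}) : perm_eq (map rho (enum T)) (enum T).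
  apply: uniq_perm; rewrite ?enum_uniq //.
    by rewrite map_inj_uniq ?enum_uniq //; exact: perm_inj.
  move=> j; rewrite mem_enum; apply/mapP.
  by exists (rho^-1 j)%g; rewrite ?mem_enum ?permKV.
by rewrite (perm_trans (perm_enum sigma)) // perm_sym.
Qed.

Section Permutations.

Variables (n : nat) (f : 'I_n -> linfun).

Definition angle_le : rel 'I_n := relpre (fun i => lf_angle (f i)) Rleb.

Definition nontrivial_seq (sigma : 'S_n) : seq 'I_n :=
  filter (nontrivial f) (map sigma (enum 'I_n)).

Lemma comp_permE (sigma : 'S_n) (x : R) :
  comp_perm f sigma x = lf_comp f (nontrivial_seq sigma) x.
Proof. by rewrite -lf_comp_filter lf_compE /comp_perm /perm_seq map_comp. Qed.

Lemma counterclockwiseP (sigma : 'S_n) :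
  counterclockwise f sigma ->
  exists k, sorted angle_le (rot k (nontrivial_seq sigma)).
Proof.
case=> k; rewrite [perm_seq _ _](map_comp f sigma) pmap_theta filter_map.
by rewrite -map_comp -map_rot sorted_map; exists k.
Qed.

Lemma nontrivial_comm (sigma : 'S_n) :
  {in nontrivial_seq sigma &, forall i j, angle_le i j -> angle_le j i ->
     forall y, lf_eval (f j) (lf_eval (f i) y) = lf_eval (f i) (lf_eval (f j) y)}.
Proof.
move=> i j; rewrite !mem_filter /nontrivial.
case Ei: (theta (f i)) => [ti|] //; case Ej: (theta (f j)) => [tj|] // _ _.
move=> /RlebP ij /RlebP ji; apply: (lf_eval_comm_theta Ej); rewrite Ei.
have [-> _] := theta_Some Ei; have [-> _] := theta_Some Ej.
by congr Some; apply: Rle_antisym.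
Qed.

End Permutations.

Theorem mainTheorem9 (n : nat) (f : 'I_n -> linfun) (sigma : 'S_n) :
  (forall i, monotone (f i)) ->
  counterclockwise f sigma ->
  (forall x : R, comp_perm f sigma x = x) ->
  forall tau : 'S_n, counterclockwise f tau ->
  forall x : R, comp_perm f tau x = x.
Proof.
move=> mono /counterclockwiseP [k sorted_sigma] sigma_id tau.
move=> /counterclockwiseP [k' sorted_tau] x.
have slope_neq0 i : (f i).1 <> 0 by have := mono i; rewrite /monotone; lra.
set Ls := nontrivial_seq f sigma in sorted_sigma.
set Lt := nontrivial_seq f tau in sorted_tau.
have rot_sigma_id y : lf_comp f (rot k Ls) y = y.
  by apply: lf_comp_rot => // z; rewrite -comp_permE.
have rot_sigma_tau : forall y, lf_comp f (rot k Ls) y = lf_comp f (rot k' Lt) y.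
  apply: (foldl_sorted_perm (relpre_trans Rleb_trans) _ sorted_sigma sorted_tau).
  - by rewrite perm_rot perm_sym perm_rot; apply/perm_filter/perm_eq_map_enum.
  - by move=> i j; rewrite !mem_rot; exact: nontrivial_comm.
rewrite comp_permE -/Lt -(rotK k' Lt) /rotr.
by apply: lf_comp_rot => // y; rewrite -rot_sigma_tau.
Qed.
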